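(* Let $\Lambda\ge1$ and let $K_0,\dots,K_\Lambda$ be non-negative integers. For $\lambda\in\{1,\dots,\Lambda\}$ define $f_\lambda:[0,\Lambda]\to\mathbb R$ by \[ f_\lambda(t)=K_\lambda\prod_{i=0}^{\lambda-1}\frac{\Lambda-t-i}{t+\lambda-i}\quad\text{for }0\le t\le \Lambda-\lambda+1,\qquad f_\lambda(t)=0\quad\text{for }\Lambda-\lambda+1\le t\le\Lambda, \] and let $f(t)=K_0+\sum_{\lambda=1}^{\Lambda}f_\lambda(t)$. Then $f$ is convex and non-increasing on $[0,\Lambda]$, and for every integer $t\in\{0,\dots,\Lambda\}$ one has $f(t)=\sum_{\lambda=0}^{\Lambda-t}K_\lambda\binom{\Lambda}{t+\lambda}/\binom{\Lambda}{t}$. In particular the sequence $t\mapsto\sum_{\lambda=0}^{\Lambda-t}K_\lambda\binom{\Lambda}{t+\lambda}/\binom{\Lambda}{t}$, $t\in\{0,\dots,\Lambda\}$, is convex and non-increasing.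
   Context: Convention: $\binom{n}{k}=0$ if $n<0$, $k<0$ or $n<k$. The two formulas defining $f_\lambda$ agree at $t=\Lambda-\lambda+1$ (both equal $0$). *)

From Stdlib Require Import Reals Lra Lia.
Open Scope R_scope.

Fixpoint prod_upto (n : nat) (g : nat -> R) : R :=
  match n with
  | O => 1
  | S m => prod_upto m g * g m
  end.

Fixpoint sum_upto (n : nat) (g : nat -> R) : R :=
  match n with
  | O => 0
  | S m => sum_upto m g + g m
  end.

Definition binomR (n k : nat) : R :=
  if Nat.leb k n then C n k else 0.

Definition f_lam (Lam : nat) (K : nat -> nat) (lam : nat) (t : R) : R :=
  if Rle_dec t (INR Lam - INR lam + 1) then
    INR (K lam) *
      prod_upto lam (fun i => (INR Lam - t - INR i) / (t + INR lam - INR i))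
  else 0.

Definition f_tot (Lam : nat) (K : nat -> nat) (t : R) : R :=
  INR (K 0%nat) + sum_upto Lam (fun j => f_lam Lam K (S j) t).

Definition convex_on (a b : R) (g : R -> R) : Prop :=
  forall x y s, a <= x <= b -> a <= y <= b -> 0 <= s <= 1 ->
    g (s * x + (1 - s) * y) <= s * g x + (1 - s) * g y.

Definition nonincreasing_on (a b : R) (g : R -> R) : Prop :=
  forall x y, a <= x <= b -> a <= y <= b -> x <= y -> g y <= g x.

Definition seq_val (Lam : nat) (K : nat -> nat) (t : nat) : R :=
  sum_upto (S (Lam - t)) (fun lam => INR (K lam) * binomR Lam (t + lam))
  / binomR Lam t.

Definition seq_convex_noninc (Lam : nat) (a : nat -> R) : Prop :=
  (forall t, (t + 1 <= Lam)%nat -> a (S t) <= a t) /\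
  (forall t, (t + 2 <= Lam)%nat -> a (S t) - a t <= a (S (S t)) - a (S t)).

(* Each factor (Λ - t - i) / (t + λ - i) of f_λ is a translated hyperbola, hence nonnegative,
   convex and nonincreasing on [0, Λ - λ + 1]; these three properties are stable under products
   because for two nonincreasing functions F, G the increments F x - F y and G x - G y have the
   same sign. The last factor vanishes at t = Λ - λ + 1, so f_λ is the product frozen at that
   point, and freezing a nonincreasing convex function by t ↦ min t c keeps it convex, since
   min · c is concave. At an integer t the products telescope into factorials, giving
   C(Λ, t + λ) / C(Λ, t); convexity and monotonicity then pass to the sampled sequence. *)

From Stdlib Require Import Reals Factorial Lra Lia.
Open Scope R_scope.

Definition convex_noninc_on (a b : R) (F : R -> R) : Prop :=
  convex_on a b F /\ nonincreasing_on a b F.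

Definition convex_noninc_nonneg_on (a b : R) (F : R -> R) : Prop :=
  convex_noninc_on a b F /\ (forall t, a <= t <= b -> 0 <= F t).

Lemma convex_comb_le a b x y s : a <= x -> b <= y -> 0 <= s <= 1 ->
  s * a + (1 - s) * b <= s * x + (1 - s) * y.
Proof. intros; nra. Qed.

Lemma convex_comb_in a b x y s : a <= x <= b -> a <= y <= b -> 0 <= s <= 1 ->
  a <= s * x + (1 - s) * y <= b.
Proof. intros; split; nra. Qed.

Lemma convex_noninc_on_ext a b F G :
  (forall t, F t = G t) -> convex_noninc_on a b F -> convex_noninc_on a b G.
Proof.
  intros E [HC HN]; split.
  - intros x y s Hx Hy Hs; rewrite <- !E; auto.
  - intros x y Hx Hy Hxy; rewrite <- !E; auto.
Qed.

Lemma convex_noninc_on_const a b k : convex_noninc_on a b (fun _ => k).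
Proof. split; [intros x y s _ _ _ | intros x y _ _ _]; lra. Qed.

Lemma convex_noninc_on_add a b F G :
  convex_noninc_on a b F -> convex_noninc_on a b G ->
  convex_noninc_on a b (fun t => F t + G t).
Proof.
  intros [CF NF] [CG NG]; split.
  - intros x y s Hx Hy Hs.
    pose proof (CF x y s Hx Hy Hs); pose proof (CG x y s Hx Hy Hs); lra.
  - intros x y Hx Hy Hxy.
    pose proof (NF x y Hx Hy Hxy); pose proof (NG x y Hx Hy Hxy); lra.
Qed.

Lemma convex_noninc_on_sum a b (F : nat -> R -> R) m :
  (forall j, (j < m)%nat -> convex_noninc_on a b (F j)) ->
  convex_noninc_on a b (fun t => sum_upto m (fun j => F j t)).
Proof.
  induction m as [|m IH]; intros HF; cbn [sum_upto].
  - apply convex_noninc_on_const.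
  - apply (convex_noninc_on_add a b (fun t => sum_upto m (fun j => F j t)) (F m)).
    + apply IH; intros j Hj; apply HF; lia.
    + apply HF; lia.
Qed.

Lemma convex_noninc_on_clamp a c L F : a <= c -> convex_noninc_on a c F ->
  convex_noninc_on a L (fun t => F (Rmin t c)).
Proof.
  intros Hac [CF NF].
  assert (Hm : forall x, a <= x -> a <= Rmin x c <= c)
    by (intros x Hx; split; [apply Rmin_glb; lra | apply Rmin_r]).
  split.
  - intros x y s Hx Hy Hs.
    assert (Hz : a <= s * x + (1 - s) * y) by (apply convex_comb_in with (b := L); auto).
    pose proof (Hm x ltac:(lra)) as Hmx; pose proof (Hm y ltac:(lra)) as Hmy.
    assert (Hmin : s * Rmin x c + (1 - s) * Rmin y c <= Rmin (s * x + (1 - s) * y) c).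
    { apply Rmin_glb.
      - apply convex_comb_le; auto; apply Rmin_l.
      - pose proof (convex_comb_le _ _ c c s (proj2 Hmx) (proj2 Hmy) Hs); lra. }
    pose proof (NF _ _ (convex_comb_in a c _ _ s Hmx Hmy Hs) (Hm _ Hz) Hmin).
    pose proof (CF _ _ s Hmx Hmy Hs); lra.
  - intros x y Hx Hy Hxy.
    apply NF; [apply Hm; lra | apply Hm; lra |].
    apply Rmin_glb; [pose proof (Rmin_l x c); lra | apply Rmin_r].
Qed.

Lemma convex_noninc_nonneg_on_ext a b F G :
  (forall t, F t = G t) -> convex_noninc_nonneg_on a b F -> convex_noninc_nonneg_on a b G.
Proof.
  intros E [HF PF]; split.
  - exact (convex_noninc_on_ext a b F G E HF).
  - intros t Ht; rewrite <- E; auto.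
Qed.

Lemma convex_noninc_nonneg_on_const a b k : 0 <= k -> convex_noninc_nonneg_on a b (fun _ => k).
Proof. split; [apply convex_noninc_on_const | auto]. Qed.

Lemma comonotone_comb_mul_le p q u v s : 0 <= (p - q) * (u - v) -> 0 <= s <= 1 ->
  (s * p + (1 - s) * q) * (s * u + (1 - s) * v) <= s * (p * u) + (1 - s) * (q * v).
Proof.
  intros Hco Hs.
  assert (E : s * (p * u) + (1 - s) * (q * v) - (s * p + (1 - s) * q) * (s * u + (1 - s) * v)
              = s * (1 - s) * ((p - q) * (u - v))) by ring.
  assert (0 <= s * (1 - s)) by nra.
  nra.
Qed.

Lemma convex_noninc_nonneg_on_mul a b F G :
  convex_noninc_nonneg_on a b F -> convex_noninc_nonneg_on a b G ->
  convex_noninc_nonneg_on a b (fun t => F t * G t).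
Proof.
  intros [[CF NF] PF] [[CG NG] PG].
  split; [split|].
  - intros x y s Hx Hy Hs.
    pose proof (convex_comb_in a b x y s Hx Hy Hs) as Hz.
    assert (Hco : 0 <= (F x - F y) * (G x - G y)).
    { destruct (Rle_dec x y) as [Hxy|Hxy].
      - pose proof (NF x y Hx Hy Hxy); pose proof (NG x y Hx Hy Hxy); nra.
      - assert (Hyx : y <= x) by lra.
        pose proof (NF y x Hy Hx Hyx); pose proof (NG y x Hy Hx Hyx); nra. }
    apply Rle_trans with ((s * F x + (1 - s) * F y) * (s * G x + (1 - s) * G y)).
    + apply Rmult_le_compat; [apply PF | apply PG | apply CF | apply CG]; auto.
    + apply comonotone_comb_mul_le; auto.
  - intros x y Hx Hy Hxy.
    apply Rmult_le_compat; [apply PF | apply PG | apply NF | apply NG]; auto.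
  - intros t Ht; apply Rmult_le_pos; auto.
Qed.

Lemma convex_noninc_nonneg_on_prod a b (F : nat -> R -> R) m :
  (forall i, (i < m)%nat -> convex_noninc_nonneg_on a b (F i)) ->
  convex_noninc_nonneg_on a b (fun t => prod_upto m (fun i => F i t)).
Proof.
  induction m as [|m IH]; intros HF; cbn [prod_upto].
  - apply convex_noninc_nonneg_on_const; lra.
  - apply (convex_noninc_nonneg_on_mul a b (fun t => prod_upto m (fun i => F i t)) (F m)).
    + apply IH; intros i Hi; apply HF; lia.
    + apply HF; lia.
Qed.

Lemma Rinv_convex X Y s : 0 < X -> 0 < Y -> 0 <= s <= 1 ->
  / (s * X + (1 - s) * Y) <= s * / X + (1 - s) * / Y.
Proof.
  intros HX HY Hs.
  assert (HZ : 0 < s * X + (1 - s) * Y) by nra.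
  assert (E : s * / X + (1 - s) * / Y - / (s * X + (1 - s) * Y) =
              s * (1 - s) * (X - Y) ^ 2 / (X * Y * (s * X + (1 - s) * Y)))
    by (field; lra).
  assert (0 <= s * (1 - s) * (X - Y) ^ 2 / (X * Y * (s * X + (1 - s) * Y))).
  { apply Rmult_le_pos.
    - apply Rmult_le_pos; [nra | apply pow2_ge_0].
    - left; apply Rinv_0_lt_compat, Rmult_lt_0_compat; [apply Rmult_lt_0_compat|]; lra. }
  lra.
Qed.

Lemma convex_noninc_nonneg_on_hyperbola a b A B : 0 < a + B -> b <= A ->
  convex_noninc_nonneg_on a b (fun t => (A - t) / (t + B)).
Proof.
  intros HB HA.
  assert (E : forall t, a <= t -> (A - t) / (t + B) = (A + B) * / (t + B) - 1)
    by (intros t Ht; field; lra).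
  split; [split|].
  - intros x y s Hx Hy Hs.
    pose proof (convex_comb_in a b x y s Hx Hy Hs) as Hz.
    rewrite !E by lra.
    pose proof (Rinv_convex (x + B) (y + B) s ltac:(lra) ltac:(lra) Hs) as Hinv.
    replace (s * (x + B) + (1 - s) * (y + B)) with (s * x + (1 - s) * y + B) in Hinv by ring.
    apply Rmult_le_compat_l with (r := A + B) in Hinv; [|lra].
    lra.
  - intros x y Hx Hy Hxy.
    rewrite !E by lra.
    assert (Hinv : / (y + B) <= / (x + B)) by (apply Rinv_le_contravar; lra).
    apply Rmult_le_compat_l with (r := A + B) in Hinv; lra.
  - intros t Ht.
    apply Rmult_le_pos; [lra | left; apply Rinv_0_lt_compat; lra].
Qed.

Lemma f_lam_vanish Lam K j t :
  INR Lam - INR (S j) + 1 <= t -> f_lam Lam K (S j) t = 0.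
Proof.
  intros Hc. unfold f_lam.
  destruct (Rle_dec t (INR Lam - INR (S j) + 1)) as [Hle|]; [|reflexivity].
  cbn [prod_upto].
  replace (INR Lam - t - INR j) with 0 by (rewrite S_INR in *; lra).
  unfold Rdiv; ring.
Qed.

Lemma f_lam_clamp Lam K j t :
  f_lam Lam K (S j) t = f_lam Lam K (S j) (Rmin t (INR Lam - INR (S j) + 1)).
Proof.
  destruct (Rle_dec t (INR Lam - INR (S j) + 1)) as [Hle|Hgt].
  - rewrite Rmin_left; auto.
  - rewrite Rmin_right by lra.
    rewrite !f_lam_vanish; lra.
Qed.

Lemma f_lam_convex_noninc Lam K j : (j <= Lam)%nat ->
  convex_noninc_on 0 (INR Lam) (f_lam Lam K (S j)).
Proof.
  intros Hj.
  set (c := INR Lam - INR (S j) + 1).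
  assert (Hc : 0 <= c) by (unfold c; rewrite S_INR; apply le_INR in Hj; lra).
  set (G := fun u => INR (K (S j)) *
              prod_upto (S j) (fun i => (INR Lam - u - INR i) / (u + INR (S j) - INR i))).
  assert (HG : convex_noninc_nonneg_on 0 c G).
  { apply (convex_noninc_nonneg_on_mul 0 c (fun _ => INR (K (S j)))).
    { apply convex_noninc_nonneg_on_const, pos_INR. }
    apply (convex_noninc_nonneg_on_prod 0 c
             (fun i u => (INR Lam - u - INR i) / (u + INR (S j) - INR i))).
    intros i Hi.
    apply (convex_noninc_nonneg_on_ext 0 c
             (fun u => (INR Lam - INR i - u) / (u + (INR (S j) - INR i)))).
    { intros u; f_equal; ring. }
    assert (INR i <= INR j) by (apply le_INR; lia).
    apply convex_noninc_nonneg_on_hyperbola; unfold c; rewrite ?S_INR in *; lra. }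
  apply (convex_noninc_on_ext _ _ (fun t => G (Rmin t c))).
  - intros t. rewrite (f_lam_clamp Lam K j t). unfold f_lam; fold c.
    destruct (Rle_dec (Rmin t c) c) as [_|Hgt]; [reflexivity |].
    exfalso; apply Hgt, Rmin_r.
  - apply convex_noninc_on_clamp; [exact Hc | apply HG].
Qed.

Lemma f_tot_convex_noninc Lam K : convex_noninc_on 0 (INR Lam) (f_tot Lam K).
Proof.
  apply (convex_noninc_on_add _ _ (fun _ => INR (K 0%nat))
           (fun t => sum_upto Lam (fun j => f_lam Lam K (S j) t))).
  - apply convex_noninc_on_const.
  - apply convex_noninc_on_sum; intros j Hj; apply f_lam_convex_noninc; lia.
Qed.

Lemma prod_upto_ext n f g :
  (forall i, (i < n)%nat -> f i = g i) -> prod_upto n f = prod_upto n g.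
Proof. induction n; cbn [prod_upto]; intros H; auto. rewrite IHn, H; auto. Qed.

Lemma prod_upto_div n f g :
  prod_upto n (fun i => f i / g i) = prod_upto n f / prod_upto n g.
Proof.
  induction n; cbn [prod_upto]; [field|].
  rewrite IHn; unfold Rdiv; rewrite Rinv_mult; ring.
Qed.

Lemma sum_upto_ext n f g :
  (forall i, (i < n)%nat -> f i = g i) -> sum_upto n f = sum_upto n g.
Proof. induction n; cbn [sum_upto]; intros H; auto. rewrite IHn, H; auto. Qed.

Lemma sum_upto_succ_l n g : sum_upto (S n) g = g 0%nat + sum_upto n (fun i => g (S i)).
Proof. induction n; cbn [sum_upto] in *; [ring|]. rewrite IHn; ring. Qed.

Lemma sum_upto_div n g b : sum_upto n g / b = sum_upto n (fun i => g i / b).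
Proof. induction n; cbn [sum_upto]; unfold Rdiv in *; [ring|]. rewrite <- IHn; ring. Qed.

Lemma sum_upto_zero_tail h m n : (m <= n)%nat ->
  (forall l, (m <= l < n)%nat -> h l = 0) -> sum_upto n h = sum_upto m h.
Proof.
  induction n as [|n IH]; intros Hmn Hz.
  - replace m with 0%nat by lia; reflexivity.
  - destruct (Nat.eq_dec m (S n)) as [->|Hne]; [reflexivity|].
    cbn [sum_upto]; rewrite IH, Hz by (lia || (intros; apply Hz; lia)); ring.
Qed.

Lemma prod_falling_fact n k : (k <= n)%nat ->
  prod_upto k (fun i => INR n - INR i) = INR (fact n) / INR (fact (n - k)).
Proof.
  induction k as [|k IH]; intros Hk; cbn [prod_upto].
  - rewrite Nat.sub_0_r; field; apply INR_fact_neq_0.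
  - rewrite IH by lia.
    replace (n - k)%nat with (S (n - S k)) by lia.
    rewrite fact_simpl, mult_INR, S_INR, minus_INR by lia.
    pose proof (INR_fact_neq_0 (n - S k)).
    assert (INR (S k) <= INR n) by (apply le_INR; lia).
    rewrite S_INR in *; field; lra.
Qed.

Lemma prod_ratio_binom Lam t lam : (t + lam <= Lam)%nat ->
  prod_upto lam (fun i => (INR Lam - INR t - INR i) / (INR t + INR lam - INR i))
  = C Lam (t + lam) / C Lam t.
Proof.
  intros H.
  rewrite prod_upto_div.
  rewrite (prod_upto_ext lam _ (fun i => INR (Lam - t) - INR i))
    by (intros; rewrite minus_INR by lia; ring).
  rewrite (prod_upto_ext lam (fun i => INR t + INR lam - INR i) (fun i => INR (t + lam) - INR i))
    by (intros; rewrite plus_INR; ring).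
  rewrite !prod_falling_fact by lia.
  unfold C.
  replace (Lam - t - lam)%nat with (Lam - (t + lam))%nat by lia.
  replace (t + lam - lam)%nat with t by lia.
  pose proof (INR_fact_neq_0 Lam); pose proof (INR_fact_neq_0 t);
    pose proof (INR_fact_neq_0 (t + lam)); pose proof (INR_fact_neq_0 (Lam - t));
    pose proof (INR_fact_neq_0 (Lam - (t + lam))).
  field; repeat split; auto.
Qed.

Lemma C_pos n k : 0 < C n k.
Proof.
  unfold C, Rdiv.
  apply Rmult_lt_0_compat; [apply INR_fact_lt_0|].
  apply Rinv_0_lt_compat, Rmult_lt_0_compat; apply INR_fact_lt_0.
Qed.

Lemma binomR_C n k : (k <= n)%nat -> binomR n k = C n k.
Proof. intros H; unfold binomR; apply Nat.leb_le in H; rewrite H; reflexivity. Qed.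

Lemma binomR_gt n k : (n < k)%nat -> binomR n k = 0.
Proof. intros H; unfold binomR; destruct (Nat.leb_spec k n); [lia | reflexivity]. Qed.

Lemma f_lam_nat Lam K j t : (t <= Lam)%nat ->
  f_lam Lam K (S j) (INR t) = INR (K (S j)) * binomR Lam (t + S j) / binomR Lam t.
Proof.
  intros Ht. rewrite (binomR_C Lam t Ht).
  destruct (Nat.le_gt_cases (t + S j) Lam) as [Hle|Hgt].
  - rewrite (binomR_C _ _ Hle). unfold f_lam.
    destruct (Rle_dec (INR t) (INR Lam - INR (S j) + 1)) as [_|Hc].
    + rewrite prod_ratio_binom by exact Hle; unfold Rdiv; ring.
    + exfalso; apply Hc. apply le_INR in Hle; rewrite plus_INR in Hle; lra.
  - assert (Hl : INR Lam <= INR t + INR j)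
      by (rewrite <- plus_INR; apply le_INR; lia).
    rewrite binomR_gt, f_lam_vanish by (lia || (rewrite S_INR; lra)).
    unfold Rdiv; ring.
Qed.

Lemma f_tot_nat Lam K t : (t <= Lam)%nat -> f_tot Lam K (INR t) = seq_val Lam K t.
Proof.
  intros Ht. unfold f_tot, seq_val.
  rewrite <- (sum_upto_zero_tail _ (S (Lam - t)) (S Lam))
    by (lia || (intros l Hl; rewrite binomR_gt by lia; ring)).
  rewrite sum_upto_succ_l, Nat.add_0_r, (binomR_C Lam t Ht).
  unfold Rdiv at 1; rewrite Rmult_plus_distr_r.
  fold (Rdiv (sum_upto Lam (fun i => INR (K (S i)) * binomR Lam (t + S i))) (C Lam t)).
  rewrite sum_upto_div.
  pose proof (C_pos Lam t).
  f_equal; [field; lra|].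
  apply sum_upto_ext; intros i Hi.
  rewrite f_lam_nat, (binomR_C Lam t Ht) by exact Ht; reflexivity.
Qed.

Lemma seq_convex_noninc_of_convex_noninc_on Lam F (a : nat -> R) :
  convex_noninc_on 0 (INR Lam) F -> (forall t, (t <= Lam)%nat -> a t = F (INR t)) ->
  seq_convex_noninc Lam a.
Proof.
  intros [HC HN] Ha.
  assert (Hin : forall t, (t <= Lam)%nat -> 0 <= INR t <= INR Lam)
    by (intros t Ht; split; [apply pos_INR | apply le_INR; exact Ht]).
  split; intros t Ht; rewrite !Ha by lia.
  - apply HN; [apply Hin; lia | apply Hin; lia | rewrite S_INR; lra].
  - pose proof (HC (INR t) (INR (S (S t))) (/ 2) (Hin t ltac:(lia))
                  (Hin (S (S t)) ltac:(lia)) ltac:(lra)) as Hmid.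
    replace (/ 2 * INR t + (1 - / 2) * INR (S (S t))) with (INR (S t)) in Hmid
      by (rewrite !S_INR; field).
    lra.
Qed.

Theorem lemma3 (Lam : nat) (K : nat -> nat) :
  (1 <= Lam)%nat ->
  convex_on 0 (INR Lam) (f_tot Lam K) /\
  nonincreasing_on 0 (INR Lam) (f_tot Lam K) /\
  (forall t : nat, (t <= Lam)%nat -> f_tot Lam K (INR t) = seq_val Lam K t) /\
  seq_convex_noninc Lam (seq_val Lam K).
Proof.
  intros _.
  destruct (f_tot_convex_noninc Lam K) as [Hconv Hnoninc].
  split; [exact Hconv|]; split; [exact Hnoninc|]; split; [exact (f_tot_nat Lam K)|].
  apply (seq_convex_noninc_of_convex_noninc_on Lam (f_tot Lam K)); [split; assumption|].
  intros t Ht; symmetry; exact (f_tot_nat Lam K t Ht).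
Qed.
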